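(* Let $\mathcal{X}$ be a nonempty open convex subset of $\mathbb{R}^n$ and let $\textbf{F}:\mathcal{X}\to I(\mathbb{R})$ be $gH$-differentiable on $\mathcal{X}$. If $\textbf{F}$ is convex on $\mathcal{X}$, then \[\textbf{0}\preceq(x-y)^T\odot\nabla\textbf{F}(x)\ominus_{gH}(x-y)^T\odot\nabla\textbf{F}(y)\quad\text{for all }x,y\in\mathcal{X}.\]
   Context: $I(\mathbb{R})$: closed bounded intervals $\textbf{A}=[\underline{a},\overline{a}]$ with Moore arithmetic ($\oplus$ endpointwise; $\lambda\odot\textbf{A}=[\lambda\underline{a},\lambda\overline{a}]$ if $\lambda\ge0$, $[\lambda\overline{a},\lambda\underline{a}]$ if $\lambda<0$); $gH$-difference $\textbf{A}\ominus_{gH}\textbf{B}=[\min\{\underline{a}-\underline{b},\overline{a}-\overline{b}\},\max\{\underline{a}-\underline{b},\overline{a}-\overline{b}\}]$; limits in the norm $\max\{|\underline{a}|,|\overline{a}|\}$; $\textbf{0}=[0,0]$. $\textbf{A}\preceq\textbf{B}$ iff $\underline{a}\le\underline{b}$ and $\overline{a}\le\overline{b}$. An IVF is $\textbf{F}(x)=[\underline{f}(x),\overline{f}(x)]$. $D_i\textbf{F}(x)=\lim_{h\to0}\frac1h\odot(\textbf{F}(x+he_i)\ominus_{gH}\textbf{F}(x))$, $\nabla\textbf{F}(x)=(D_1\textbf{F}(x),\dots,D_n\textbf{F}(x))^T$, $d^T\odot\nabla\textbf{F}(x)=\bigoplus_i d_i\odot D_i\textbf{F}(x)$. Linear IVF: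 $\textbf{L}(x)=\bigoplus_i x_i\odot\textbf{L}(e_i)$. $\textbf{F}$ is $gH$-differentiable at $\bar{x}$ if there exist a linear IVF $\textbf{L}_{\bar{x}}$, an IVF $\textbf{E}(\textbf{F}(\bar{x});d)$ and $\delta>0$ with $(\textbf{F}(\bar{x}+d)\ominus_{gH}\textbf{F}(\bar{x}))\ominus_{gH}\textbf{L}_{\bar{x}}(d)=\lVert d\rVert\odot\textbf{E}(\textbf{F}(\bar{x});d)$ for $\lVert d\rVert<\delta$ and $\textbf{E}\to\textbf{0}$ as $\lVert d\rVert\to0$; on $\mathcal{X}$ means at every point. $\textbf{F}$ is convex if $\textbf{F}(\lambda x_1+(1-\lambda)x_2)\preceq\lambda\odot\textbf{F}(x_1)\oplus(1-\lambda)\odot\textbf{F}(x_2)$ for all $x_1,x_2\in\mathcal{X}$, $\lambda\in[0,1]$. *)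

From HB Require Import structures.
From mathcomp Require Import all_boot all_order all_algebra.
From mathcomp Require Import boolp classical_sets reals.
Set Implicit Arguments. Unset Strict Implicit. Unset Printing Implicit Defensive.
Import Order.TTheory GRing.Theory Num.Theory.
Local Open Scope ring_scope.

Section IntervalDefs.
Variable R : realType.

(* A closed bounded interval [lo, hi] is represented by the pair (lo, hi);
   validity lo <= hi is imposed as a hypothesis on the IVF. *)
Definition itv := (R * R)%type.
Definition ivalid (A : itv) : Prop := A.1 <= A.2.
Definition izero : itv := (0, 0).
Definition iadd (A B : itv) : itv := (A.1 + B.1, A.2 + B.2).
Definition iscale (l : R) (A : itv) : itv :=
  if 0 <= l then (l * A.1, l * A.2) else (l * A.2, l * A.1).
Definition igh (A B : itv) : itv :=
  (Num.min (A.1 - B.1) (A.2 - B.2), Num.max (A.1 - B.1) (A.2 - B.2)).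
Definition inorm (A : itv) : R := Num.max `|A.1| `|A.2|.
Definition ile (A B : itv) : Prop := A.1 <= B.1 /\ A.2 <= B.2.

Variable n : nat.

Definition vnorm (d : 'rV[R]_n) : R := \big[Num.max/0]_(j < n) `|d ord0 j|.
Definition evec (i : 'I_n) : 'rV[R]_n := delta_mx ord0 i.

(* d^T (.) G  =  (+)_i d_i (.) G_i  ; also the linear IVF with L(e_i) = G i *)
Definition ilinc (d : 'rV[R]_n) (G : 'I_n -> itv) : itv :=
  \big[iadd/izero]_(i < n) iscale (d ord0 i) (G i).

Variable X : 'rV[R]_n -> Prop.
Variable F : 'rV[R]_n -> itv.

Definition open_set : Prop :=
  forall x, X x -> exists r, 0 < r /\ forall y, vnorm (y - x) < r -> X y.
Definition convex_set : Prop :=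
  forall x1 x2 (l : R), X x1 -> X x2 -> 0 <= l <= 1 ->
    X (l *: x1 + (1 - l) *: x2).

Definition is_Dpartial (x : 'rV[R]_n) (i : 'I_n) (D : itv) : Prop :=
  forall eps, 0 < eps -> exists delta, 0 < delta /\
    forall h : R, h != 0 -> `|h| < delta -> X (x + h *: evec i) ->
      inorm (igh (iscale h^-1 (igh (F (x + h *: evec i)) (F x))) D) < eps.

Definition Dpartial (x : 'rV[R]_n) (i : 'I_n) : itv :=
  xget izero (fun D => is_Dpartial x i D).

Definition grad (x : 'rV[R]_n) : 'I_n -> itv := fun i => Dpartial x i.

Definition gH_differentiable_at (xb : 'rV[R]_n) : Prop :=
  exists (c : 'I_n -> itv) (E : 'rV[R]_n -> itv) (delta : R),
    0 < delta /\
    (forall d, vnorm d < delta -> X (xb + d) ->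
       igh (igh (F (xb + d)) (F xb)) (ilinc d c) = iscale (vnorm d) (E d)) /\
    (forall eps, 0 < eps -> exists r, 0 < r /\
       forall d, vnorm d < r -> inorm (E d) < eps).

Definition gH_differentiable_on : Prop :=
  forall x, X x -> gH_differentiable_at x.

Definition ivf_convex : Prop :=
  forall x1 x2 (l : R), X x1 -> X x2 -> 0 <= l <= 1 ->
    ile (F (l *: x1 + (1 - l) *: x2))
        (iadd (iscale l (F x1)) (iscale (1 - l) (F x2))).

End IntervalDefs.

From HB Require Import structures.
From mathcomp Require Import all_boot all_order all_algebra.
From mathcomp Require Import boolp classical_sets reals.
From mathcomp Require Import ring lra.
Import Order.TTheory GRing.Theory Num.Theory.
Set Implicit Arguments. Unset Strict Implicit. Unset Printing Implicit Defensive.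
Local Open Scope ring_scope.

(** If [F] is gH-differentiable at [x] with linear part [c], then [grad F x = c]:
    the partial difference quotients converge to [c i], and such limits are
    unique since [X] is open.  Let [A] and [B] be [(x - y)^T (.) grad F] at [x]
    and at [y]; the claim says that [B] lies below [A] at both endpoints.  For
    [0 < s <= 1], adding the convexity inequalities at [y + s (x - y)] and
    [x + s (y - x)] shows that the gH-increments of [F] along these two steps
    have crosswise endpoint sums at most [0].  Divided by [s] they tend to [B]
    and to [-A] (whose endpoints are swapped), so letting [s] tend to [0] gives
    the claim. *)

Section IntervalArithmetic.
Variable R : realType.
Implicit Types (A B C D L P : itv R) (a b : R).

Lemma ge0_iscale a P : 0 <= a -> iscale a P = (a * P.1, a * P.2).
Proof. by rewrite /iscale => ->. Qed.

Lemma iscaleN1 P : iscale (-1) P = (- P.2, - P.1).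
Proof. by rewrite /iscale ler0N1 !mulN1r. Qed.

Lemma iscale1 P : iscale 1 P = P.
Proof. by rewrite ge0_iscale // !mul1r -surjective_pairing. Qed.

Lemma iscale_izero a : iscale a (izero R) = izero R.
Proof. by rewrite /iscale /izero mulr0; case: ifP. Qed.

Lemma iscale_mul a b P : iscale (a * b) P = iscale a (iscale b P).
Proof.
rewrite /iscale; case: (leP 0 a) => ha; case: (leP 0 b) => hb;
  case: (leP 0 (a * b)) => hab /=; rewrite ?mulrA //; try (exfalso; nra).
- have -> : a = 0 by nra. by rewrite !mul0r.
- have -> : b = 0 by nra. by rewrite !mulr0 !mul0r.
Qed.

Lemma iscaleK a P : a != 0 -> iscale a^-1 (iscale a P) = P.
Proof. by move=> a0; rewrite -iscale_mul mulVf // iscale1. Qed.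

Lemma iscale_iadd a A B : iscale a (iadd A B) = iadd (iscale a A) (iscale a B).
Proof. by rewrite /iscale /iadd; case: ifP => _ /=; rewrite !mulrDr. Qed.

Lemma iscale_igh a A B : iscale a (igh A B) = igh (iscale a A) (iscale a B).
Proof.
rewrite /iscale /igh; case: (leP 0 a) => ha /=; rewrite -!mulrBr.
  by rewrite minr_pMr ?maxr_pMr.
by rewrite minr_nMr ?maxr_nMr ?ltW // minC maxC.
Qed.

Lemma inorm_ge0 P : 0 <= inorm P.
Proof. by rewrite /inorm le_max normr_ge0. Qed.

Lemma inorm_iscale a P : inorm (iscale a P) = `|a| * inorm P.
Proof.
by rewrite /inorm /iscale maxr_pMr //; case: ifP => _ /=; rewrite !normrM // maxC.
Qed.

Lemma inorm_igh A B : inorm (igh A B) = Num.max `|A.1 - B.1| `|A.2 - B.2|.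
Proof.
rewrite /inorm /igh /= [Num.min (A.1 - _) _]minEle [Num.max (A.1 - _) _]maxEle.
by case: leP => _ //; rewrite maxC.
Qed.

Lemma inorm_igh_triangle A B C :
  inorm (igh A B) <= inorm (igh C A) + inorm (igh C B).
Proof.
rewrite !inorm_igh ge_max; apply/andP; split.
  apply: le_trans (ler_distD C.1 _ _) _; rewrite distrC.
  by apply: lerD; rewrite le_max lexx.
apply: le_trans (ler_distD C.2 _ _) _; rewrite distrC.
by apply: lerD; rewrite le_max lexx orbT.
Qed.

Lemma inorm_igh_le0 A B : inorm (igh A B) <= 0 -> A = B.
Proof.
rewrite inorm_igh ge_max !normr_le0 !subr_eq0 => /andP [/eqP e1 /eqP e2].
by rewrite [A]surjective_pairing [B]surjective_pairing e1 e2.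
Qed.

Lemma igh_iscaleV a P L :
  a != 0 -> igh (iscale a^-1 P) L = iscale a^-1 (igh P (iscale a L)).
Proof. by move=> a0; rewrite iscale_igh iscaleK. Qed.

Lemma inorm_igh_iscale_lt a P L eps : 0 < a -> inorm (igh (iscale a P) L) < eps ->
  `|a * P.1 - L.1| < eps /\ `|a * P.2 - L.2| < eps.
Proof. by move=> a0; rewrite ge0_iscale ?ltW // inorm_igh gt_max => /andP. Qed.

Lemma igh_add_le0 A B C D :
  A.1 - B.1 + (C.1 - D.1) <= 0 -> A.2 - B.2 + (C.2 - D.2) <= 0 ->
  (igh A B).1 + (igh C D).2 <= 0 /\ (igh A B).2 + (igh C D).1 <= 0.
Proof.
rewrite /igh /= [Num.min (A.1 - _) _]minEle [Num.max (A.1 - _) _]maxEle.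
rewrite [Num.min (C.1 - _) _]minEle [Num.max (C.1 - _) _]maxEle => sum1 sum2.
by case: (leP (A.1 - B.1)); case: (leP (C.1 - D.1)) => *; split; lra.
Qed.

Lemma ile_izero_igh A B : B.1 <= A.1 -> B.2 <= A.2 -> ile (izero R) (igh A B).
Proof. by move=> le1 le2; rewrite /ile /igh /= le_min le_max !subr_ge0 le1 le2. Qed.

End IntervalArithmetic.

Section RowVectors.
Variables (R : realType) (n : nat).
Implicit Types (v d : 'rV[R]_n) (c : 'I_n -> itv R).

Lemma vnorm_ge0 v : 0 <= vnorm v.
Proof. exact: bigmax_ge_id. Qed.

Lemma vnormZ_le (a : R) v : vnorm (a *: v) <= `|a| * vnorm v.
Proof.
apply: bigmax_le => [|j _]; first by rewrite mulr_ge0 ?vnorm_ge0.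
by rewrite mxE normrM ler_wpM2l // (le_bigmax _ (fun j => `|v ord0 j|)).
Qed.

Lemma vnorm_evec_le1 (i : 'I_n) : vnorm (evec R i) <= 1.
Proof.
by apply: bigmax_le => // j _; rewrite mxE; case: (_ && _); rewrite ?normr1 ?normr0.
Qed.

Lemma ilincZ (a : R) d c : ilinc (a *: d) c = iscale a (ilinc d c).
Proof.
rewrite /ilinc (big_morph (iscale a) (iscale_iadd a) (iscale_izero a)).
by apply: eq_bigr => j _; rewrite mxE iscale_mul.
Qed.

Lemma ilincN d c : ilinc (- d) c = iscale (-1) (ilinc d c).
Proof. by rewrite -ilincZ scaleN1r. Qed.

Lemma ilinc_evec c (i : 'I_n) : ilinc (evec R i) c = c i.
Proof.
have coord j : (iscale (evec R i ord0 j) (c j)) = if j == i then c j else izero R.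
  rewrite /evec mxE eqxx /= eq_sym; case: eqP => _; first exact: iscale1.
  by rewrite ge0_iscale // !mul0r.
rewrite /ilinc (eq_bigr _ (fun j _ => coord j)) [LHS]surjective_pairing.
rewrite (big_morph fst (id1 := 0) (op1 := +%R)) //.
rewrite (big_morph snd (id1 := 0) (op1 := +%R)) //.
under eq_bigr do rewrite (fun_if fst).
under [X in (_, X)]eq_bigr do rewrite (fun_if snd).
by rewrite -!big_mkcond !big_pred1_eq -surjective_pairing.
Qed.
End RowVectors.

Section Differentiability.
Variables (R : realType) (n : nat) (X : 'rV[R]_n -> Prop) (F : 'rV[R]_n -> itv R).

Definition gH_linearization (x : 'rV[R]_n) (c : 'I_n -> itv R) : Prop :=
  exists (E : 'rV[R]_n -> itv R) (delta : R),
    0 < delta /\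
    (forall d, vnorm d < delta -> X (x + d) ->
       igh (igh (F (x + d)) (F x)) (ilinc d c) = iscale (vnorm d) (E d)) /\
    (forall eps, 0 < eps -> exists r, 0 < r /\
       forall d, vnorm d < r -> inorm (E d) < eps).

Lemma linearization_quotient x c d : gH_linearization x c ->
  forall eps, 0 < eps -> exists t0, 0 < t0 /\
    forall h, h != 0 -> `|h| < t0 -> X (x + h *: d) ->
      inorm (igh (iscale h^-1 (igh (F (x + h *: d)) (F x))) (ilinc d c)) < eps.
Proof.
move=> [E [delta [delta0 [expand smallE]]]] eps eps0.
have K0 : 0 < vnorm d + 1 by have := vnorm_ge0 d; lra.
set K := vnorm d + 1 in K0 *.
have [r [r0 hr]] := smallE (eps / K) (divr_gt0 eps0 K0).
exists (Num.min delta r / K); split; first by rewrite divr_gt0 // lt_min delta0 r0.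
move=> h h0; rewrite ltr_pdivlMr // => hK Xh.
have hd : vnorm (h *: d) <= `|h| * K.
  apply: le_trans (vnormZ_le h d) _.
  by rewrite ler_wpM2l // lerDl.
have := le_lt_trans hd hK; rewrite lt_min => /andP [hdelta /hr hE].
rewrite igh_iscaleV // -ilincZ expand // !inorm_iscale normfV.
rewrite (ger0_norm (vnorm_ge0 _)) ltr_pdivrMl ?normr_gt0 //.
apply: (@le_lt_trans _ _ (`|h| * K * inorm (E (h *: d)))).
  by rewrite ler_wpM2r ?inorm_ge0.
by rewrite -mulrA ltr_pM2l ?normr_gt0 // mulrC -ltr_pdivlMr.
Qed.

Lemma is_Dpartial_linearization x c (i : 'I_n) :
  gH_linearization x c -> is_Dpartial X F x i (c i).
Proof.
move=> lin eps eps0; have [t0 [t00 quot]] := linearization_quotient (evec R i) lin eps0.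
by exists t0; split=> // h h0 ht0 Xh; rewrite -(ilinc_evec c i); apply: quot.
Qed.

Lemma open_set_evec x (i : 'I_n) : open_set X -> X x ->
  exists r, 0 < r /\ forall h, `|h| < r -> X (x + h *: evec R i).
Proof.
move=> hopen Xx; have [r [r0 ball]] := hopen x Xx.
exists r; split=> // h hr; apply: ball; rewrite addrC addKr.
apply: le_lt_trans (vnormZ_le _ _) _.
by apply: le_lt_trans hr; rewrite ler_piMr ?vnorm_evec_le1.
Qed.

Lemma is_Dpartial_unique x (i : 'I_n) D1 D2 : open_set X -> X x ->
  is_Dpartial X F x i D1 -> is_Dpartial X F x i D2 -> D1 = D2.
Proof.
move=> hopen Xx D1P D2P; apply: inorm_igh_le0; apply/ler_addgt0Pr => e e0.
have e20 : 0 < e / 2 by rewrite divr_gt0.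
have [r [r0 Xr]] := open_set_evec i hopen Xx.
have [t1 [t10 quot1]] := D1P _ e20; have [t2 [t20 quot2]] := D2P _ e20.
pose m := Num.min r (Num.min t1 t2).
have m0 : 0 < m by rewrite !lt_min r0 t10 t20.
have h0 : 0 < m / 2 by rewrite divr_gt0.
have : `|m / 2| < m by rewrite gtr0_norm // ltr_pdivrMr //; lra.
rewrite !lt_min => /andP [/Xr Xh /andP [ht1 ht2]].
have := quot1 _ (lt0r_neq0 h0) ht1 Xh; have := quot2 _ (lt0r_neq0 h0) ht2 Xh.
have := inorm_igh_triangle D1 D2
  (iscale (m / 2)^-1 (igh (F (x + (m / 2) *: evec R i)) (F x))).
lra.
Qed.

Lemma grad_linearization x c : open_set X -> X x ->
  gH_linearization x c -> grad X F x = c.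
Proof.
move=> hopen Xx lin; apply: funext => i.
have Dc := is_Dpartial_linearization i lin.
by apply: (is_Dpartial_unique hopen Xx _ Dc); apply: xgetPex; exists (c i).
Qed.

End Differentiability.

Section ConvexIVF.
Variables (R : realType) (n : nat) (X : 'rV[R]_n -> Prop) (F : 'rV[R]_n -> itv R).
Hypotheses (hconv : convex_set X) (hF : ivf_convex X F).
Implicit Types (x y : 'rV[R]_n) (s : R).

Lemma segment_combination x y s : y + s *: (x - y) = s *: x + (1 - s) *: y.
Proof. by rewrite scalerBr scalerBl scale1r addrCA. Qed.

Lemma ivf_convex_increments x y s : X x -> X y -> 0 <= s <= 1 ->
  (igh (F (y + s *: (x - y))) (F y)).1 + (igh (F (x + s *: (y - x))) (F x)).2 <= 0 /\
  (igh (F (y + s *: (x - y))) (F y)).2 + (igh (F (x + s *: (y - x))) (F x)).1 <= 0.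
Proof.
move=> Xx Xy s01; have /andP [s0 s1] := s01.
have [c1 c2] := hF Xx Xy s01; have [c3 c4] := hF Xy Xx s01.
move: c1 c2 c3 c4; rewrite !segment_combination /iadd /=.
rewrite !ge0_iscale ?subr_ge0 //= => c1 c2 c3 c4.
by apply: igh_add_le0; lra.
Qed.

Lemma linearization_monotone_approx x y cx cy e : X x -> X y ->
  gH_linearization X F x cx -> gH_linearization X F y cy -> 0 < e ->
  (ilinc (x - y) cy).1 <= (ilinc (x - y) cx).1 + e /\
  (ilinc (x - y) cy).2 <= (ilinc (x - y) cx).2 + e.
Proof.
move=> Xx Xy linx liny e0; have e20 : 0 < e / 2 by rewrite divr_gt0.
have [tx [tx0 quotx]] := linearization_quotient (y - x) linx e20.
have [ty [ty0 quoty]] := linearization_quotient (x - y) liny e20.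
pose s := Num.min 1 (Num.min tx ty) / 2.
have m0 : 0 < Num.min 1 (Num.min tx ty) by rewrite !lt_min ltr01 tx0 ty0.
have s0 : 0 < s by rewrite divr_gt0.
have : s < Num.min 1 (Num.min tx ty) by rewrite ltr_pdivrMr //; lra.
rewrite !lt_min -(gtr0_norm s0) => /andP [/ltW s1 /andP [stx sty]].
have s01 : 0 <= s <= 1 by rewrite ltW // -(gtr0_norm s0).
have Xz : X (y + s *: (x - y)) by rewrite segment_combination; apply: hconv.
have Xw : X (x + s *: (y - x)) by rewrite segment_combination; apply: hconv.
have si0 : 0 < s^-1 by rewrite invr_gt0.
have [qy1 qy2] := inorm_igh_iscale_lt si0 (quoty _ (lt0r_neq0 s0) sty Xz).
have [qx1 qx2] := inorm_igh_iscale_lt si0 (quotx _ (lt0r_neq0 s0) stx Xw).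
move: qx1 qx2; rewrite -[y - x]opprB ilincN iscaleN1 /= !opprK opprB.
have [sum1 sum2] := ivf_convex_increments Xx Xy s01.
rewrite -(pmulr_rle0 _ si0) mulrDr in sum1.
rewrite -(pmulr_rle0 _ si0) mulrDr in sum2.
move: qy1 qy2 sum1 sum2 => /=; rewrite !ltr_norml.
by move=> /andP [? ?] /andP [? ?] ? ? /andP [? ?] /andP [? ?]; split; lra.
Qed.

Lemma linearization_monotone x y cx cy : X x -> X y ->
  gH_linearization X F x cx -> gH_linearization X F y cy ->
  (ilinc (x - y) cy).1 <= (ilinc (x - y) cx).1 /\
  (ilinc (x - y) cy).2 <= (ilinc (x - y) cx).2.
Proof.
move=> Xx Xy linx liny.
by split; apply/ler_addgt0Pr => e /(linearization_monotone_approx Xx Xy linx liny) [].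
Qed.

End ConvexIVF.

Theorem theorem3p4 (R : realType) (n : nat)
  (X : 'rV[R]_n -> Prop) (F : 'rV[R]_n -> itv R)
  (hne : exists x, X x) (hopen : open_set X) (hconv : convex_set X)
  (hvalid : forall x, X x -> ivalid (F x))
  (hdiff : gH_differentiable_on X F)
  (hF : ivf_convex X F) :
  forall x y, X x -> X y ->
    ile (izero R)
      (igh (ilinc (x - y) (grad X F x)) (ilinc (x - y) (grad X F y))).
Proof.
move=> x y Xx Xy.
have [cx linx] := hdiff x Xx; have [cy liny] := hdiff y Xy.
rewrite (grad_linearization hopen Xx linx) (grad_linearization hopen Xy liny).
have [le1 le2] := linearization_monotone hconv hF Xx Xy linx liny.
exact: ile_izero_igh.
Qed.
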